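(* Let $X$ and $Y$ be real Banach spaces with $Y\neq\{0\}$. Then $\{\gamma\in F_Y(X):\gamma(T)=0\ \text{for all}\ T\in L(X,Y)\}=\ker(\beta_X^Y)$.
   Context: $Lip_0(X,Y)$ is the Banach space of Lipschitz maps $f:X\to Y$ with $f(0)=0$ and norm $Lip(f)=\sup_{x\neq y}\|f(x)-f(y)\|/\|x-y\|$; $L(X,Y)$ (bounded linear operators) is regarded as a subspace of it. For $x\in X$, $\delta_x^Y\in L(Lip_0(X,Y),Y)$ is evaluation $\delta_x^Y(f)=f(x)$. $F_Y(X)$ is the norm-closed linear span of $\{\delta_x^Y:x\in X\}$ in $L(Lip_0(X,Y),Y)$. $\beta_X^Y:F_Y(X)\to X$ is the bounded linear contraction with $\beta_X^Y(\sum_i\alpha_i\delta_{x_i}^Y)=\sum_i\alpha_ix_i$ on finite combinations, extended by continuity. *)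

From HB Require Import structures.
From mathcomp Require Import all_boot all_order all_algebra.
From mathcomp Require Import all_classical all_reals all_analysis.
Set Implicit Arguments. Unset Strict Implicit. Unset Printing Implicit Defensive.
Import Order.TTheory GRing.Theory Num.Theory.
Import numFieldNormedType.Exports.
Local Open Scope classical_set_scope.
Local Open Scope ring_scope.

Section LipFree.
Variables (R : realType) (X Y : normedModType R).

Definition lip0 (f : X -> Y) : Prop :=
  f 0 = 0 /\ exists k : R, forall x y : X, `|f x - f y| <= k * `|x - y|.

Definition lip0_ball (f : X -> Y) : Prop :=
  f 0 = 0 /\ forall x y : X, `|f x - f y| <= `|x - y|.

(* Elements of L(Lip_0(X,Y),Y) are represented as maps gamma : (X -> Y) -> Y;
   only their values on Lip_0(X,Y) are relevant. *)

(* finite combination sum_i a_i delta_{x_i}, encoded by s = [:: (a_i, x_i)] *)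
Definition delta_comb (s : seq (R * X)) : (X -> Y) -> Y :=
  fun f => \sum_(p <- s) p.1 *: f p.2.

(* its image under beta : sum_i a_i x_i *)
Definition beta_fin (s : seq (R * X)) : X := \sum_(p <- s) p.1 *: p.2.

(* operator-norm bound ||gamma - eta||_{L(Lip_0(X,Y),Y)} <= e *)
Definition opdist_le (gamma eta : (X -> Y) -> Y) (e : R) : Prop :=
  forall f, lip0_ball f -> `|gamma f - eta f| <= e.

Definition lin_on_lip0 (gamma : (X -> Y) -> Y) : Prop :=
  forall (a : R) (f g : X -> Y), lip0 f -> lip0 g ->
    gamma (fun x => a *: f x + g x) = a *: gamma f + gamma g.

(* gamma lies in F_Y(X): the norm closure in L(Lip_0(X,Y),Y) of the linear
   span of the evaluations delta_x *)
Definition in_FY (gamma : (X -> Y) -> Y) : Prop :=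
  lin_on_lip0 gamma /\
  forall e : R, 0 < e -> exists s : seq (R * X), opdist_le gamma (delta_comb s) e.

(* x is the value at gamma of the continuous extension of
   sum_i a_i delta_{x_i} |-> sum_i a_i x_i *)
Definition beta_value (gamma : (X -> Y) -> Y) (x : X) : Prop :=
  forall e : R, 0 < e -> exists2 d : R, 0 < d &
    forall s : seq (R * X), opdist_le gamma (delta_comb s) d ->
      `|x - beta_fin s| <= e.

Definition beta (gamma : (X -> Y) -> Y) : X := xget 0 (beta_value gamma).

End LipFree.

From HB Require Import structures.
From mathcomp Require Import all_boot all_order all_algebra.
From mathcomp Require Import all_classical all_reals all_analysis.
From mathcomp Require Import lra ring.
Import Order.TTheory GRing.Theory Num.Theory.
Import numFieldNormedType.Exports.
Local Open Scope classical_set_scope.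
Local Open Scope ring_scope.
Set Implicit Arguments. Unset Strict Implicit. Unset Printing Implicit Defensive.

(* A bounded linear [T] maps [sum_i a_i delta_(x_i)] to [T (sum_i a_i x_i)], so
   approximating [gamma] by such combinations gives [gamma T = T (beta gamma)]
   for every [T] in [L(X,Y)] (after rescaling to [Lip T <= 1]).  Thus [gamma]
   annihilates [L(X,Y)] iff every such [T] kills [beta gamma], i.e. iff
   [beta gamma = 0]: a nonzero [x] is detected by [u |-> f u *: y0] with [f] a
   Hahn-Banach norming functional at [x].  The same norming operators make the
   [beta]-images of approximants of [gamma] Cauchy, and [X] is complete. *)

Section NormingFunctional.
Variables (R : realType) (X : normedModType R).

Definition dominated_linear_graph (G : set (X * R)) : Prop :=
  [/\ forall x a b, G (x, a) -> G (x, b) -> a = b,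
      forall c x y a b, G (x, a) -> G (y, b) -> G (c *: x + y, c * a + b) &
      forall x a, G (x, a) -> a <= `|x|].

Lemma bigcup_dominated_linear_graph (F : set (set (X * R))) :
  F `<=` dominated_linear_graph -> total_on F subset ->
  dominated_linear_graph (\bigcup_(G in F) G).
Proof.
move=> Fdom Ftot; split.
- move=> x a b [G1 FG1 G1a] [G2 FG2 G2b].
  have [G12|G21] := Ftot _ _ FG1 FG2.
  + by case: (Fdom _ FG2) => fun2 _ _; exact: fun2 (G12 _ G1a) G2b.
  + by case: (Fdom _ FG1) => fun1 _ _; exact: fun1 G1a (G21 _ G2b).
- move=> c x y a b [G1 FG1 G1a] [G2 FG2 G2b].
  have [G12|G21] := Ftot _ _ FG1 FG2.
  + by exists G2 => //; case: (Fdom _ FG2) => _ comb2 _; exact: comb2 (G12 _ G1a) G2b.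
  + by exists G1 => //; case: (Fdom _ FG1) => _ comb1 _; exact: comb1 G1a (G21 _ G2b).
- by move=> x a [G FG Ga]; case: (Fdom _ FG) => _ _ le_norm; exact: le_norm Ga.
Qed.

Section OneStepExtension.
Variables (G : set (X * R)) (domG : dominated_linear_graph G) (G00 : G (0, 0)).

Let G_functional := let: And3 h _ _ := domG in h.
Let G_comb := let: And3 _ h _ := domG in h.
Let G_le_norm := let: And3 _ _ h := domG in h.

Let GZ c x a : G (x, a) -> G (c *: x, c * a).
Proof. by move=> Ga; have := G_comb c Ga G00; rewrite !addr0. Qed.

Variables (w : X) (Gw : forall a, ~ G (w, a)).

(* Any value [c] with [b - |y - w| <= c <= |x + w| - a] for all [(x, a)] and
   [(y, b)] in [G] is admissible at [w]; such values exist because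
   [a + b <= |x + y|]. *)
Let lower := [set r | exists y b, G (y, b) /\ r = b - `|y - w|].

Let lower_ub x a : G (x, a) -> ubound lower (`|x + w| - a).
Proof.
move=> Ga _ [y [b [Gb ->]]].
have := G_le_norm (G_comb 1 Gb Ga); rewrite scale1r mul1r.
have : `|y + x| <= `|x + w| + `|y - w|.
  by rewrite (_ : y + x = (x + w) + (y - w)) ?ler_normD // addrCA addrK.
lra.
Qed.

Let c := sup lower.

Let c_ge y b : G (y, b) -> b - `|y - w| <= c.
Proof.
move=> Gb; apply: ub_le_sup; last by exists y, b.
by exists (`|0 + w| - 0); apply: lower_ub.
Qed.

Let c_le x a : G (x, a) -> c <= `|x + w| - a.
Proof.
move=> Ga; apply: ge_sup; last exact: lower_ub.
by exists (0 - `|0 - w|), 0, 0.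
Qed.

Let ext := [set p | exists x a t, G (x, a) /\ p = (x + t *: w, a + t * c)].

Let ext_le_norm x a t : G (x, a) -> a + t * c <= `|x + t *: w|.
Proof.
move=> Ga; have [t_lt0|t_gt0|->] := ltgtP t 0; last first.
- by rewrite mul0r scale0r !addr0; exact: G_le_norm.
- have nx : `|x + t *: w| = t * `|t^-1 *: x + w|.
    rewrite -[t in t * _]gtr0_norm // -normrZ scalerDr scalerA.
    by rewrite mulfV ?gt_eqF ?scale1r.
  have := ler_wpM2l (ltW t_gt0) (c_le (GZ t^-1 Ga)).
  by rewrite mulrBr mulrA mulfV ?gt_eqF // mul1r nx; lra.
- set s := - t; have s_gt0 : 0 < s by rewrite oppr_gt0.
  have nx : `|x + t *: w| = s * `|s^-1 *: x - w|.
    rewrite -[s in s * _]gtr0_norm // -normrZ scalerBr scalerA mulfV ?gt_eqF //.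
    by rewrite scale1r /s scaleNr opprK.
  have := ler_wpM2l (ltW s_gt0) (c_ge (GZ s^-1 Ga)).
  by rewrite mulrBr mulrA mulfV ?gt_eqF // mul1r nx /s; lra.
Qed.

Let ext_dominated : dominated_linear_graph ext.
Proof.
split.
- move=> _ _ _ [x [a [t [Ga [-> ->]]]]] [x' [a' [t' [Ga' [ex ->]]]]].
  have [tt'|tt'] := eqVneq t t'.
    subst t'; have xx' : x = x' by move/(canRL (addrK _)): ex; rewrite addrK.
    by subst x; rewrite (G_functional Ga Ga').
  suff : G (w, (t - t')^-1 * (a' - a)) by move/Gw.
  have -> : w = (t - t')^-1 *: (x' - x).
    rewrite (canRL (addrK _) (esym ex)) addrAC (addrAC x) subrr add0r -scalerBl.
    by rewrite scalerA mulVf ?subr_eq0 ?scale1r.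
  by apply: GZ; have := G_comb (-1) Ga Ga'; rewrite scaleN1r mulN1r !(addrC (- _)).
- move=> d _ _ _ _ [x [a [t [Ga [-> ->]]]]] [x' [a' [t' [Ga' [-> ->]]]]].
  exists (d *: x + x'), (d * a + a'), (d * t + t'); split; first exact: G_comb.
  congr (_, _); last by ring.
  by rewrite scalerDr scalerDl scalerA !addrA (addrAC (d *: x)).
- by move=> _ _ [x [a [t [Ga [-> ->]]]]]; exact: ext_le_norm.
Qed.

Lemma dominated_linear_graph_extend : exists2 B, G `<` B & dominated_linear_graph B.
Proof.
exists ext => //; split.
  by move=> [x a] Ga; exists x, a, 0; rewrite scale0r mul0r !addr0.
move=> /(_ (w, c)) extG; apply: Gw (extG _).
by exists 0, 0, 1; rewrite scale1r mul1r !add0r.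
Qed.

End OneStepExtension.

Lemma dominated_linear_graph_line (z : X) :
  dominated_linear_graph [set p | exists t, p = (t *: z, t * `|z|)].
Proof.
split.
- move=> _ a b [t [-> ->]] [t' [zz' ->]].
  have [->|z0] := eqVneq z 0; first by rewrite normr0 !mulr0.
  have /eqP : (t - t') *: z = 0 by rewrite scalerBl zz' subrr.
  by rewrite scaler_eq0 (negPf z0) orbF subr_eq0 => /eqP ->.
- move=> c _ _ _ _ [t [-> ->]] [t' [-> ->]]; exists (c * t + t').
  by rewrite scalerDl scalerA mulrDl mulrA.
- by move=> _ _ [t [-> ->]]; rewrite normrZ ler_wpM2r // ler_norm.
Qed.

Lemma dominated_linear_graph00 G x a :
  dominated_linear_graph G -> G (x, a) -> G (0, 0).
Proof.
case=> _ G_comb _ Ga; have := G_comb (-1) _ _ _ _ Ga Ga.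
by rewrite scaleN1r mulN1r !addNr.
Qed.

Lemma total_dominated_linear_graph_fun G :
  dominated_linear_graph G -> (forall x, exists a, G (x, a)) ->
  exists f : X -> R,
    [/\ linear_for *%R f, forall x, `|f x| <= `|x| & forall x, G (x, f x)].
Proof.
move=> domG Gtot; have [a0 G0] := Gtot 0.
have G00 := dominated_linear_graph00 domG G0; case: domG => G_fun G_comb G_le.
pose f x := xget 0 [set a | G (x, a)].
have Gf x : G (x, f x) by exact: xgetPex (Gtot x).
exists f; split => // [c x y|x].
  exact: G_fun (Gf _) (G_comb _ _ _ _ _ (Gf x) (Gf y)).
rewrite ler_norml G_le ?andbT //.
have := G_le _ _ (G_comb (-1) _ _ _ _ (Gf x) G00).
by rewrite !addr0 scaleN1r mulN1r normrN lerNl.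
Qed.

Lemma norming_functional (z : X) :
  exists f : X -> R, [/\ linear_for *%R f, forall x, `|f x| <= `|x| & f z = `|z|].
Proof.
(* The guard [G !=set0 -> ...] lets the empty chain through Zorn's lemma. *)
pose P G := dominated_linear_graph G /\ (G !=set0 -> G (z, `|z|)).
have chainP F : F `<=` P -> total_on F subset -> P (\bigcup_(G in F) G).
  move=> FP Ftot; split.
    by apply: bigcup_dominated_linear_graph => // G /FP [].
  by move=> [p [G FG Gp]]; exists G => //; apply: (FP _ FG).2; exists p.
have [A [[domA Az] maxA]] := Zorn_bigcup chainP.
pose line := [set p | exists t, p = (t *: z, t * `|z|)].
have line_z : line (z, `|z|) by exists 1; rewrite scale1r mul1r.
have {}Az : A (z, `|z|).
  apply: Az; apply: contrapT => A0.
  apply: (maxA line); last by split=> [|_]; first exact: dominated_linear_graph_line.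
  split=> [p Ap|/(_ _ line_z) Az]; first by exfalso; apply: A0; exists p.
  by apply: A0; exists (z, `|z|).
have Atot x : exists a, A (x, a).
  apply: contrapT => Ax; have Axa a : ~ A (x, a) by move=> Axa; apply: Ax; exists a.
  have [B AB domB] :=
    dominated_linear_graph_extend domA (dominated_linear_graph00 domA Az) Axa.
  by apply: (maxA B AB); split => // _; exact: AB.1 _ Az.
have [f [f_lin f_le Af]] := total_dominated_linear_graph_fun domA Atot.
by exists f; split => //; case: domA => A_fun _ _; exact: A_fun (Af z) Az.
Qed.

End NormingFunctional.

Section LinearProbes.
Variables (R : realType) (X Y : normedModType R).

Lemma linear_lip0_ball (T : {linear X -> Y}) :
  (forall v, `|T v| <= `|v|) -> lip0_ball T.
Proof. by move=> Tle; split=> [|u v]; rewrite ?linear0 // -linearB. Qed.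

Lemma lip0_ball_continuous (f : X -> Y) : lip0_ball f -> continuous f.
Proof.
move=> [_ f_lip] x; apply/cvgrPdist_lt => e e_gt0; apply/nbhs_ballP.
by exists e => // v; rewrite -ball_normE /=; apply: le_lt_trans (f_lip x v).
Qed.

Lemma delta_comb_linear (T : {linear X -> Y}) s :
  delta_comb s T = T (beta_fin s).
Proof.
rewrite /delta_comb /beta_fin; elim: s => [|[a x] s IHs].
  by rewrite !big_nil linear0.
by rewrite !big_cons linearP IHs.
Qed.

Variable gamma : (X -> Y) -> Y.

Lemma opdist_le_linear s d (T : {linear X -> Y}) :
  opdist_le gamma (delta_comb s) d -> lip0_ball T ->
  `|gamma T - T (beta_fin s)| <= d.
Proof. by move=> gamma_s T1; rewrite -delta_comb_linear; exact: gamma_s. Qed.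

Lemma opdist_le_trans (eta : (X -> Y) -> Y) d d' :
  opdist_le gamma eta d -> d <= d' -> opdist_le gamma eta d'.
Proof. by move=> gamma_eta dd' f f1; apply: le_trans (gamma_eta f f1) dd'. Qed.

Lemma in_FY_linear_ballE x (T : {linear X -> Y}) :
  in_FY gamma -> beta_value gamma x -> lip0_ball T -> gamma T = T x.
Proof.
move=> [_ gamma_approx] betax T1; apply/eqP; rewrite -subr_eq0 -normr_le0.
apply/ler_addgt0Pr => e e_gt0; rewrite add0r.
have e2_gt0 : 0 < e / 2 by rewrite divr_gt0.
have [d d_gt0 betax_d] := betax _ e2_gt0.
have [s gamma_s] : exists s, opdist_le gamma (delta_comb s) (Num.min d (e / 2)).
  by apply: gamma_approx; rewrite lt_min d_gt0 e2_gt0.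
have x_s : `|x - beta_fin s| <= e / 2.
  by apply/betax_d/(opdist_le_trans gamma_s); rewrite ge_min lexx.
have gamma_s' : opdist_le gamma (delta_comb s) (e / 2).
  by apply: (opdist_le_trans gamma_s); rewrite ge_min lexx orbT.
have := opdist_le_linear gamma_s' T1; have := T1.2 (beta_fin s) x.
rewrite distrC in x_s; move: (ler_distD (T (beta_fin s)) (gamma T) (T x)).
lra.
Qed.

Lemma lin_on_lip0Z a (f : X -> Y) :
  lin_on_lip0 gamma -> lip0 f -> gamma (fun v => a *: f v) = a *: gamma f.
Proof.
move=> gamma_lin f_lip.
have zero_lip : lip0 (fun _ : X => (0 : Y)).
  by split=> //; exists 0 => u v; rewrite subrr normr0 mul0r.
have gamma0 : gamma (fun _ => 0) = 0.
  have := gamma_lin 1 _ _ zero_lip zero_lip; rewrite !scale1r addr0.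
  by rewrite -[X in X = _]addr0 => /addrI <-.
have := gamma_lin a _ _ f_lip zero_lip; rewrite gamma0 addr0 => <-.
by congr gamma; apply/funext => v; rewrite addr0.
Qed.

Lemma in_FY_linearE x (T : {linear X -> Y}) :
  in_FY gamma -> beta_value gamma x -> continuous T -> gamma T = T x.
Proof.
move=> gammaF betax T_cont; have [gamma_lin _] := gammaF.
have [k k_gt0 Tk] : exists2 k, 0 < k & forall v, `|T v| <= k * `|v|.
  by apply/pinfty_ex_gt0/linear_boundedP/(continuous_linear_bounded 0)/T_cont.
have scaledE : T \o *:%R k^-1 = fun v => k^-1 *: T v.
  by apply/funext => v; exact: linearZ.
have scaled1 : lip0_ball (T \o *:%R k^-1 : {linear X -> Y}).
  apply: linear_lip0_ball => v /=; rewrite linearZ normrZ gtr0_norm ?invr_gt0 //.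
  by rewrite ler_pdivrMl.
have T_lip : lip0 T by split; [exact: linear0 | exists k => u v; rewrite -linearB].
have /= := in_FY_linear_ballE gammaF betax scaled1.
rewrite scaledE linearZ lin_on_lip0Z //.
by apply: scalerI; rewrite invr_eq0 gt_eqF.
Qed.

End LinearProbes.

Section NormingOperators.
Variables (R : realType) (X Y : normedModType R) (y0 : Y) (y0_neq0 : y0 != 0).

Lemma norming_operator x :
  exists2 T : {linear X -> Y}, lip0_ball T & `|T x| = `|x|.
Proof.
have [f [f_lin f_le fx]] := norming_functional x.
have y0_gt0 : 0 < `|y0| by rewrite normr_gt0.
have normT u : `|(f u / `|y0|) *: y0| = `|f u|.
  by rewrite normrZ normrM normfV normr_id divfK ?gt_eqF.
have T_lin : linear (fun u => (f u / `|y0|) *: y0).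
  by move=> a u v /=; rewrite f_lin mulrDl scalerDl -mulrA scalerA.
pose T : {linear X -> Y} :=
  HB.pack (fun u => (f u / `|y0|) *: y0) (GRing.isLinear.Build _ _ _ _ _ T_lin).
exists T.
  by apply: linear_lip0_ball => u /=; rewrite normT.
by rewrite /= normT fx normr_id.
Qed.

Lemma norm_le_lip0_ball (v : X) e :
  (forall T : {linear X -> Y}, lip0_ball T -> `|T v| <= e) -> `|v| <= e.
Proof. by move=> Tv_le; have [T T1 <-] := norming_operator v; exact: Tv_le. Qed.

Lemma beta_fin_dist (gamma : (X -> Y) -> Y) s t d d' :
  opdist_le gamma (delta_comb s) d -> opdist_le gamma (delta_comb t) d' ->
  `|beta_fin s - beta_fin t| <= d + d'.
Proof.
move=> gamma_s gamma_t; apply: norm_le_lip0_ball => T T1; rewrite linearB.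
have := opdist_le_linear gamma_s T1; have := opdist_le_linear gamma_t T1.
have := ler_distD (gamma T) (T (beta_fin s)) (T (beta_fin t)).
by rewrite (distrC (T (beta_fin s)) (gamma T)); lra.
Qed.

End NormingOperators.

Section BetaValue.
Variables (R : realType) (X : completeNormedModType R) (Y : normedModType R).
Variables (y0 : Y) (y0_neq0 : y0 != 0) (gamma : (X -> Y) -> Y).

Let inv_small e : 0 < e -> \forall n \near \oo, n.+1%:R^-1 < e :> R.
Proof. by move=> e_gt0; exact: (near_infty_natSinv_lt (PosNum e_gt0)). Qed.

Lemma cvg_beta_fin_approx (s : nat -> seq (R * X)) :
  (forall n, opdist_le gamma (delta_comb (s n)) n.+1%:R^-1) ->
  cvgn (fun n => beta_fin (s n)).
Proof.
move=> s_approx; apply: cauchy_cvg; apply: cauchy_exP => e e_gt0.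
have e2_gt0 : 0 < e / 2 by rewrite divr_gt0.
near \oo => N; exists (beta_fin (s N)).
suff : \forall n \near \oo, ball (beta_fin (s N)) e (beta_fin (s n)) by [].
near=> n; rewrite -ball_normE /=.
apply: le_lt_trans (beta_fin_dist y0_neq0 (s_approx N) (s_approx n)) _.
rewrite [e]splitr; apply: ltrD.
  by near: N; exact: inv_small.
by near: n; exact: inv_small.
Unshelve. all: by end_near.
Qed.

Lemma exists_beta_value : in_FY gamma -> exists x, beta_value gamma x.
Proof.
move=> [_ gamma_approx].
have approx (n : nat) : exists s, opdist_le gamma (delta_comb s) n.+1%:R^-1.
  by apply: gamma_approx; rewrite invr_gt0.
have [s s_approx] := choice approx.
exists (limn (fun n => beta_fin (s n))) => e e_gt0; set x := limn _.
have e4_gt0 : 0 < e / 4 by rewrite divr_gt0.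
exists (e / 2) => [|t gamma_t]; first by rewrite divr_gt0.
near \oo => n.
have x_sn : `|x - beta_fin (s n)| < e / 4.
  by near: n; exact: cvgr_dist_lt (cvg_beta_fin_approx s_approx) _ e4_gt0.
have n_small : n.+1%:R^-1 < e / 4 by near: n; exact: inv_small.
have := beta_fin_dist y0_neq0 (s_approx n) gamma_t.
have := ler_distD (beta_fin (s n)) x (beta_fin t).
move: n_small; move: (n.+1%:R^-1) => c; lra.
Unshelve. all: by end_near.
Qed.

End BetaValue.

Theorem mainTheorem12 (R : realType) (X Y : completeNormedModType R)
  (hY : exists y : Y, y != 0) (gamma : (X -> Y) -> Y) :
  in_FY gamma ->
  ((forall T : X -> Y, linear T -> continuous T -> gamma T = 0) <->
   beta gamma = 0).
Proof.
move=> gammaF; have [y0 y0_neq0] := hY.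
have betaP : beta_value gamma (beta gamma).
  exact: xgetPex (exists_beta_value y0_neq0 gammaF).
split=> [gammaL0 | beta0 T T_lin T_cont].
- apply/eqP; rewrite -normr_le0; apply: (norm_le_lip0_ball y0_neq0) => T T1.
  rewrite -(in_FY_linear_ballE gammaF betaP T1) gammaL0 ?normr0 //.
    exact: linearP.
  exact: lip0_ball_continuous.
- pose TL : {linear X -> Y} := HB.pack T (GRing.isLinear.Build _ _ _ _ T T_lin).
  have := in_FY_linearE gammaF betaP (T_cont : continuous TL).
  by rewrite beta0 linear0.
Qed.
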